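(* Let $n\ge 2k\ge 1$, and let $w$ be a weighted $k$-uniform hypergraph on a vertex set $V$ with $|V|=n$, with $W$-vector $(W_0,\ldots,W_k)$. Fix a sequence $x_1,y_1,\ldots,x_k,y_k$ of $2k$ distinct vertices of $V$, and for $0\le i\le k$ define $\phi_i,\phi_i^*:V^{(k)}\to\mathbb{R}$ by $\phi_i(A)=(-1)^{|A\cap\{y_1,\ldots,y_i\}|}$ if $|A\cap\{x_j,y_j\}|=1$ for all $j=1,\ldots,i$, and $\phi_i(A)=0$ otherwise, and $\phi_i^*=\phi_i/\binom{n-2i}{k-i}$. Then for every $0\le i\le k$, $$W_i=\mathbb{E}_\pi|\langle w_\pi,\phi_i^*\rangle|,$$ where $\pi$ is a uniformly random permutation of $V$.
   Context: $V^{(k)}$ is the family of $k$-subsets of $V$; a weighted $k$-uniform hypergraph on $V$ is a function $w:V^{(k)}\to\mathbb{R}$; $w(S)=\sum_{e\in S^{(k)}}w(e)$; $\langle w,u\rangle=\sum_{e\in V^{(k)}}w(e)u(e)$; $w_\pi(e)=w(\pi^{-1}(e))$. In particular $\phi_0$ is the constant function $1$. $W$-vector (defined recursively on $k$): $W_0=|w(V)|/\binom nk$ (for $k=0$, $w$ is a single real number and $W_0=|w|$). For $k\ge1$ and distinct $x,y\in V$, $w^{xy}:(V\setminus\{x,y\})^{(k-1)}\to\mathbb{R}$ is $w^{xy}(e)=w(e\cup\{x\})-w(e\cup\{y\})$; with $(W^{xy}_0,\ldots,W^{xy}_{k-1})$ its $W$-vector, $W_i=\frac{1}{n(n-1)}\sum_{(x,y):\,x\ne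 y}W^{xy}_{i-1}$ for $1\le i\le k$ (average over ordered pairs of distinct vertices). *)

From mathcomp Require Import all_boot all_order all_algebra all_fingroup.
Set Implicit Arguments. Unset Strict Implicit. Unset Printing Implicit Defensive.
Import Order.TTheory GRing.Theory Num.Theory.
Local Open Scope ring_scope.

Section Defs.
Variables (R : realFieldType) (T : finType).

(* A weighted k-uniform hypergraph on a vertex set U : {set T} is represented
   by a function w : {set T} -> R; only its values on k-subsets of U matter. *)

Definition total_weight (k : nat) (U : {set T}) (w : {set T} -> R) : R :=
  \sum_(e : {set T} | (e \subset U) && (#|e| == k)) w e.

Definition wxy (w : {set T} -> R) (x y : T) : {set T} -> R :=
  fun e => w (x |: e) - w (y |: e).

Fixpoint Wv (k : nat) (U : {set T}) (w : {set T} -> R) (i : nat) {struct k} : R :=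
  match i with
  | 0 => `|total_weight k U w| / ('C(#|U|, k))%:R
  | i'.+1 =>
    match k with
    | 0 => 0
    | k'.+1 =>
      (\sum_(x in U) \sum_(y in U | y != x) Wv k' (U :\ x :\ y) (wxy w x y) i')
        / (#|U| * (#|U| - 1))%:R
    end
  end.

Definition hdot (k : nat) (w u : {set T} -> R) : R :=
  \sum_(e : {set T} | #|e| == k) w e * u e.

Definition hperm (w : {set T} -> R) (p : {perm T}) : {set T} -> R :=
  fun e => w ((p^-1)%g @: e).

(* phi_i for the sequence x_1,y_1,...,x_k,y_k (given as x, y : 'I_k -> T,
   with index j : 'I_k standing for j+1). *)
Definition phi (k : nat) (x y : 'I_k -> T) (i : nat) : {set T} -> R :=
  fun A =>
    if [forall j : 'I_k, (j < i)%N ==> (#|A :&: [set x j; y j]| == 1%N)]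
    then (-1) ^+ #|A :&: [set y j | j in 'I_k & (j < i)%N]|
    else 0.

Definition phistar (k : nat) (x y : 'I_k -> T) (i : nat) : {set T} -> R :=
  fun A => phi x y i A / ('C(#|T| - 2 * i, k - i))%:R.

End Defs.

From mathcomp Require Import all_boot all_order all_algebra all_fingroup.
From mathcomp Require Import zify.
From mathcomp.algebra_tactics Require Import ring.
Set Implicit Arguments. Unset Strict Implicit. Unset Printing Implicit Defensive.
Import Order.TTheory GRing.Theory Num.Theory.
Local Open Scope ring_scope.

(* Unfolding the recursion, W_i is the average over the #|V| ^_ (2 i) sequences of
   i disjoint ordered pairs (a_1, b_1), ..., (a_i, b_i) of
   |w^{a_1 b_1 ... a_i b_i}(V \ {a_1, ..., b_i})| / C(n - 2i, k - i), and the total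
   weight of the iterated difference is the signed sum
   \sum_A \prod_j (1_A(a_j) - 1_A(b_j)) w(A).  Since
   phi_i(A) = \prod_(j <= i) (1_A(x_j) - 1_A(y_j)), the product <w_pi, phi_i> is that
   signed sum for the pairs (pi^-1 x_j, pi^-1 y_j), and as pi runs over the
   permutations of V these hit every sequence of i disjoint pairs (n - 2i)! times. *)

Section PairSequences.
Variable T : finType.
Implicit Types (U A B : {set T}) (s : seq (T * T)).

Fixpoint fresh_pairs U s : bool :=
  if s is ab :: s' then
    [&& ab.1 \in U, ab.2 \in U, ab.2 != ab.1 & fresh_pairs (U :\ ab.1 :\ ab.2) s']
  else true.

Fixpoint unused_vertices U s : {set T} :=
  if s is ab :: s' then unused_vertices (U :\ ab.1 :\ ab.2) s' else U.

Fixpoint wxy_iter (R : realFieldType) s (w : {set T} -> R) : {set T} -> R :=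
  if s is ab :: s' then wxy_iter s' (wxy w ab.1 ab.2) else w.

Lemma cardsD1D1 U a b :
  a \in U -> b \in U -> b != a -> #|U :\ a :\ b| = (#|U| - 2)%N.
Proof.
move=> aU bU ba; rewrite (cardsD1 a U) aU (cardsD1 b (U :\ a)) !inE ba bU.
by rewrite !add1n subn2.
Qed.

Lemma fresh_pairs_sub U s ab : fresh_pairs U s -> ab \in s -> (ab.1 \in U) && (ab.2 \in U).
Proof.
elim: s U => [//|[a b] s IH] U /= /and4P [aU bU _ fresh_s].
rewrite inE => /orP [/eqP -> /=|ab_s]; first by rewrite aU bU.
by case/andP: (IH _ fresh_s ab_s); rewrite !inE => /and3P [_ _ ->] /and3P [_ _ ->].
Qed.

Lemma big_fresh_pairsS (V : Type) (idx : V) (op : Monoid.com_law idx) m U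
    (F : m.+1.-tuple (T * T) -> V) :
  \big[op/idx]_(t : m.+1.-tuple (T * T) | fresh_pairs U t) F t =
  \big[op/idx]_(a in U) \big[op/idx]_(b in U | b != a)
     \big[op/idx]_(t : m.-tuple (T * T) | fresh_pairs (U :\ a :\ b) t)
        F [tuple of (a, b) :: t].
Proof.
rewrite (reindex (fun u : (T * T) * m.-tuple (T * T) => [tuple of u.1 :: u.2])) /=;
  last first.
  exists (fun t : m.+1.-tuple (T * T) => (thead t, [tuple of behead t])).
    by move=> [ab t] _; congr (_, _); apply: val_inj.
  by move=> [[|ab t] //= ?] _; apply: val_inj.
transitivity (\big[op/idx]_(a : T) \big[op/idx]_(b : T)
    \big[op/idx]_(t : m.-tuple (T * T) | fresh_pairs U ((a, b) :: t))
       F [tuple of (a, b) :: t]).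
  rewrite pair_big pair_big_dep /=.
  by apply: eq_bigr => -[[a b] t] _; congr F; apply: val_inj.
rewrite [RHS]big_mkcond /=; apply: eq_bigr => a _.
have [aU|aU] := boolP (a \in U); last by apply: big1 => b _; rewrite big_pred0.
rewrite [RHS]big_mkcond /=; apply: eq_bigr => b _.
by case: (b \in U); case: (b != a); rewrite //= big_pred0.
Qed.

Lemma card_fresh_pairs m U :
  (\sum_(t : m.-tuple (T * T) | fresh_pairs U t) 1)%N = #|U| ^_ (2 * m).
Proof.
elim: m U => [|m IH] U.
  by rewrite (big_pred1 [tuple]) // => t; rewrite [t]tuple0 /= eqxx.
rewrite big_fresh_pairsS mulnS add2n !ffactnS.
rewrite (eq_bigr (fun _ => #|U|.-1 * #|U|.-2 ^_ (2 * m)))%N ?sum_nat_const //.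
move=> a aU; rewrite (eq_bigr (fun _ => #|U|.-2 ^_ (2 * m)))%N; last first.
  by move=> b /andP [bU ba]; rewrite IH cardsD1D1 // subn2.
rewrite sum_nat_const; congr (_ * _)%N.
by rewrite -cardsE (cardsD1 a U) aU; apply: eq_card => b; rewrite !inE andbC.
Qed.

Lemma Wv_fresh_pairs (R : realFieldType) i k U (w : {set T} -> R) : (i <= k)%N ->
  Wv k U w i =
  (\sum_(t : i.-tuple (T * T) | fresh_pairs U t)
      `|total_weight (k - i) (unused_vertices U t) (wxy_iter t w)|)
  / ('C(#|U| - 2 * i, k - i) * #|U| ^_ (2 * i))%:R.
Proof.
elim: i k U w => [|i IH] k U w le_ik.
  rewrite (big_pred1 [tuple]) /=; last by move=> t; rewrite [t]tuple0 /= eqxx.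
  by rewrite muln0 !subn0 muln1; case: k {le_ik}.
case: k le_ik => [//|k] le_ik /=.
have -> : (#|U| - 2 * i.+1 = #|U| - 2 - 2 * i)%N by lia.
have -> : (#|U| ^_ (2 * i.+1) = #|U| * (#|U| - 1) * (#|U| - 2) ^_ (2 * i))%N.
  by rewrite mulnS add2n !ffactnS mulnA subn1 subn2.
rewrite subSS big_fresh_pairsS.
rewrite !mulr_suml; apply: eq_bigr => a aU.
rewrite !mulr_suml; apply: eq_bigr => b /andP [bU ba].
by rewrite IH ?cardsD1D1 // -!mulrA -!invfM -!natrM mulnAC [in RHS]mulnA.
Qed.

Lemma cardsI1 A a : #|A :&: [set a]| = (a \in A) :> nat.
Proof.
have [aA|aA] := boolP (a \in A); first by rewrite (setIidPr _) ?cards1 ?sub1set.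
by apply/eqP; rewrite cards_eq0 setI_eq0 disjoint_sym disjoints1.
Qed.

Lemma cardsI_set2 A a b : a != b -> #|A :&: [set a; b]| = ((a \in A) + (b \in A))%N.
Proof.
move=> ab; rewrite setIUr cardsU !cardsI1 setIACA setIid.
suff -> : [set a] :&: [set b] = set0 by rewrite setI0 cards0 subn0.
by apply/eqP; rewrite setI_eq0 disjoints1 inE.
Qed.

Lemma sum_subsets_setU1 (V : nmodType) U a b k (F : {set T} -> V) :
  a \in U -> b \in U -> a != b ->
  \sum_(A : {set T} | (A \subset U) && (#|A| == k.+1) && ((a \in A) && (b \notin A))) F A =
  \sum_(B : {set T} | (B \subset U :\ a :\ b) && (#|B| == k)) F (a |: B).
Proof.
move=> aU bU ab.
rewrite (reindex_onto (fun B => a |: B) (fun A => A :\ a)); last first.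
  by move=> A /andP [_ /andP [aA _]]; rewrite setD1K.
apply: eq_bigl => B.
rewrite !subsetD1 subUset sub1set aU cardsU1 !in_setU1 eqxx (eq_sym b a) (negbTE ab) /=.
have [aB|aB] /= := boolP (a \in B).
  have -> : ((a |: B) :\ a == B) = false.
    by apply/negbTE/eqP => /setP /(_ a); rewrite setD11 aB.
  by rewrite !andbF.
rewrite setU1K // eqxx add1n eqSS andbT.
by case: (B \subset U); case: (#|B| == k); case: (b \in B).
Qed.

Section SignedWeight.
Variable R : realFieldType.
Implicit Type w : {set T} -> R.

(* The paper's phi_i for s = [:: (x_1, y_1); ...; (x_i, y_i)], see [phi_prod]. *)
Definition phi_pairs s A : R := \prod_(ab <- s) ((ab.1 \in A)%:R - (ab.2 \in A)%:R).

Definition signed_weight U k w s : R :=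
  \sum_(A : {set T} | (A \subset U) && (#|A| == k)) phi_pairs s A * w A.

Lemma phi_pairsU1 s c A :
  (forall ab, ab \in s -> (ab.1 != c) && (ab.2 != c)) ->
  phi_pairs s (c |: A) = phi_pairs s A.
Proof.
move=> s_c; apply: eq_big_seq => ab /s_c /andP [c1 c2].
by rewrite !in_setU1 (negbTE c1) (negbTE c2).
Qed.

Lemma signed_weight_cons U k w a b s :
  a \in U -> b \in U -> b != a -> fresh_pairs (U :\ a :\ b) s ->
  signed_weight U k.+1 w ((a, b) :: s) = signed_weight (U :\ a :\ b) k (wxy w a b) s.
Proof.
move=> aU bU ba fresh_s; have ab : a != b by rewrite eq_sym.
have s_ab c : c \notin U :\ a :\ b -> forall ab, ab \in s -> (ab.1 != c) && (ab.2 != c).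
  move=> cU ab' /(fresh_pairs_sub fresh_s) /andP [h1 h2].
  by apply/andP; split; apply: contraNneq cU => <-.
have s_a B : phi_pairs s (a |: B) = phi_pairs s B.
  by apply/phi_pairsU1/s_ab; rewrite !inE eqxx andbF.
have s_b B : phi_pairs s (b |: B) = phi_pairs s B.
  by apply/phi_pairsU1/s_ab; rewrite !inE eqxx.
transitivity
  (\sum_(A : {set T} | (A \subset U) && (#|A| == k.+1) && ((a \in A) && (b \notin A)))
      phi_pairs s A * w A -
   \sum_(A : {set T} | (A \subset U) && (#|A| == k.+1) && ((b \in A) && (a \notin A)))
      phi_pairs s A * w A).
  rewrite !(big_mkcondr _ _ (fun A : {set T} => (A \subset U) && (#|A| == k.+1))) -sumrB.
  apply: eq_bigr => A _; rewrite /phi_pairs big_cons /=.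
  by case: (a \in A); case: (b \in A); rewrite /=; ring.
set F := fun A => phi_pairs s A * w A.
have DC : U :\ b :\ a = U :\ a :\ b by apply/setP => z; rewrite !inE andbCA.
rewrite (sum_subsets_setU1 _ F) // (sum_subsets_setU1 _ F) // DC -sumrB.
by apply: eq_bigr => B _; rewrite /F s_a s_b -mulrBr.
Qed.

Lemma signed_weight_fresh U k w s : fresh_pairs U s -> (size s <= k)%N ->
  signed_weight U k w s = total_weight (k - size s) (unused_vertices U s) (wxy_iter s w).
Proof.
elim: s U k w => [|[a b] s IH] U k w /=.
  by move=> _ _; rewrite subn0; apply: eq_bigr => A _; rewrite /phi_pairs big_nil mul1r.
case: k => [//|k] /and4P [aU bU ba fresh_s] le_sk.
by rewrite signed_weight_cons // IH.
Qed.

End SignedWeight.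

Lemma fresh_pairs_map m (u v : 'I_m -> T) (r : seq 'I_m) U :
  injective u -> injective v -> (forall j j', u j != v j') -> uniq r ->
  (forall j, j \in r -> (u j \in U) && (v j \in U)) ->
  fresh_pairs U [seq (u j, v j) | j <- r].
Proof.
move=> u_inj v_inj uv; elim: r U => [//|j r IH] U /= /andP [j_r r_uniq] rU.
have /andP [uU vU] := rU j (mem_head _ _).
rewrite uU vU eq_sym uv /=; apply: IH => // j' j'r.
have /andP [uU' vU'] := rU j' (mem_behead (s := j :: r) j'r).
have j'j : j' != j by apply: contraNneq j_r => <-.
by rewrite !inE uU' vU' !andbT (inj_eq u_inj) (inj_eq v_inj) j'j uv eq_sym uv.
Qed.

Section PermPairs.
Variables (m : nat) (u v : 'I_m -> T).
Hypotheses (u_inj : injective u) (v_inj : injective v) (uv : forall j j', u j != v j').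

Definition perm_pairs (p : {perm T}) : m.-tuple (T * T) :=
  [tuple ((p^-1)%g (u j), (p^-1)%g (v j)) | j < m].

Lemma fresh_perm_pairs p : fresh_pairs setT (perm_pairs p).
Proof.
apply: (fresh_pairs_map (u := fun j => (p^-1)%g (u j)) (v := fun j => (p^-1)%g (v j))).
- by move=> j j' /perm_inj /u_inj.
- by move=> j j' /perm_inj /v_inj.
- by move=> j j'; rewrite (inj_eq perm_inj).
- exact: enum_uniq.
- by move=> j _; rewrite !in_setT.
Qed.

Definition pair_vertices : {set T} := [set u j | j : 'I_m] :|: [set v j | j : 'I_m].

Lemma card_pair_vertices : #|pair_vertices| = (2 * m)%N.
Proof.
rewrite cardsU !card_imset // card_ord.
suff -> : [set u j | j : 'I_m] :&: [set v j | j : 'I_m] = set0.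
  by rewrite cards0 subn0 mul2n addnn.
apply/setP => z; rewrite !inE; apply/negbTE/negP.
by case/andP => /imsetP [j _ ->] /imsetP [j' _ /eqP]; rewrite (negbTE (uv j j')).
Qed.

(* The fiber of [perm_pairs] through [p0] is the coset of the pointwise
   stabilizer of [pair_vertices]. *)
Lemma card_perm_pairs_fiber p0 :
  #|[set p | perm_pairs p == perm_pairs p0]| = (#|T| - 2 * m)`!.
Proof.
pose H := [set q : {perm T} | perm_on (~: pair_vertices) q].
have cardH : #|H| = (#|T| - 2 * m)`!.
  rewrite cardsE card_perm -card_pair_vertices; congr (_`!).
  by rewrite -(cardsC pair_vertices) addKn.
rewrite -cardH -(card_imset H (mulgI p0)); apply: eq_card => p.
rewrite !inE; apply/idP/imsetP.
- move=> /eqP fiber_p; exists (p0^-1 * p)%g; last by rewrite mulKVg.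
  rewrite inE; apply/subsetP => z; rewrite !inE; apply: contraNN => z_marked.
  rewrite permM; apply/eqP.
  case/orP: z_marked => /imsetP [j _ ->];
    have := congr1 (fun t => tnth t j) fiber_p; rewrite !tnth_mktuple => -[e1 e2].
  + by rewrite -e1 permKV.
  + by rewrite -e2 permKV.
- move=> [q]; rewrite inE => /perm_onV q_on ->.
  apply/eqP/eq_from_tnth => j; rewrite !tnth_mktuple invMg !permM.
  by rewrite !(out_perm q_on) // !inE negbK; apply/orP; [right|left]; apply: imset_f.
Qed.

Lemma card_perm_pairs_preim (t : m.-tuple (T * T)) :
  fresh_pairs setT t -> #|[set p | perm_pairs p == t]| = (#|T| - 2 * m)`!.
Proof.
have fiber_le (t' : m.-tuple (T * T)) :
    (#|[set p | perm_pairs p == t']| <= (#|T| - 2 * m)`!)%N.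
  have [->|[p0]] := set_0Vmem [set p | perm_pairs p == t']; first by rewrite cards0.
  by rewrite inE => /eqP <-; rewrite card_perm_pairs_fiber.
have sum_fibers :
  (\sum_(t' : m.-tuple (T * T) | fresh_pairs setT t') #|[set p | perm_pairs p == t']|)%N =
  (\sum_(t' : m.-tuple (T * T) | fresh_pairs setT t') (#|T| - 2 * m)`!)%N.
  rewrite [RHS](eq_bigr (fun=> 1 * (#|T| - 2 * m)`!))%N => [|t' _]; last by rewrite mul1n.
  rewrite -big_distrl /= card_fresh_pairs cardsT ffact_fact; last first.
    by rewrite -card_pair_vertices max_card.
  have -> : #|T|`! = #|{perm T}|.
    rewrite -cardsT -card_perm; apply: eq_card => p /=.
    by apply/subsetP => z _; rewrite in_setT.
  rewrite -sum1_card (partition_big perm_pairs (fresh_pairs setT)) /=.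
    by apply: eq_bigr => t' _; rewrite sum1dep_card; apply: eq_card => p; rewrite !inE.
  by move=> p _; apply: fresh_perm_pairs.
move=> fresh_t; apply/eqP.
have [_] := leqif_sum (fun (t' : m.-tuple (T * T)) (_ : fresh_pairs setT t') =>
  leqif_eq (fiber_le t')).
by rewrite sum_fibers eqxx => /esym /forall_inP; apply.
Qed.

Lemma sum_perm_pairs (V : nmodType) (F : m.-tuple (T * T) -> V) :
  \sum_(p : {perm T}) F (perm_pairs p) =
  (\sum_(t : m.-tuple (T * T) | fresh_pairs setT t) F t) *+ (#|T| - 2 * m)`!.
Proof.
rewrite (partition_big perm_pairs (fresh_pairs setT)) /=; last first.
  by move=> p _; apply: fresh_perm_pairs.
rewrite -sumrMnl; apply: eq_bigr => t fresh_t.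
rewrite (eq_bigr (fun _ => F t)) => [|p /eqP -> //].
by rewrite -(card_perm_pairs_preim fresh_t) -sumr_const; apply: eq_bigl => p; rewrite inE.
Qed.

End PermPairs.

Lemma mem_imset_perm (p : {perm T}) B z : (z \in p @: B) = ((p^-1)%g z \in B).
Proof. by rewrite -{1}(permKV p z) mem_imset //; apply: perm_inj. Qed.

Lemma imset_permVK (p : {perm T}) B : (p^-1)%g @: (p @: B) = B.
Proof. by apply/setP => z; rewrite !mem_imset_perm invgK permK. Qed.

Lemma phi_prod (R : realFieldType) k i (x y : 'I_k -> T) A :
  injective y -> (forall j, x j != y j) ->
  phi R x y i A = \prod_(j < k | (j < i)%N) ((x j \in A)%:R - (y j \in A)%:R).
Proof.
move=> y_inj xy; rewrite /phi.
case: ifP => [/forallP one_of_pair | /negbT/forallPn [j]]; last first.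
  rewrite negb_imply cardsI_set2 // => /andP [ji not_one].
  rewrite (bigD1 j) //=; move: not_one.
  by case: (x j \in A); case: (y j \in A); rewrite //= subrr mul0r.
have sign (j : 'I_k) :
    (j < i)%N -> ((x j \in A)%:R - (y j \in A)%:R : R) = (-1) ^+ (y j \in A).
  move=> ji; move: (implyP (one_of_pair j) ji); rewrite cardsI_set2 //.
  by case: (x j \in A); case: (y j \in A); rewrite //= ?subr0 ?sub0r ?expr0 ?expr1.
rewrite (eq_bigr _ sign) prodrXr; congr (_ ^+ _); symmetry.
transitivity (\sum_(j < k | (j < i)%N && (y j \in A)) 1)%N.
  by rewrite big_mkcondr; apply: eq_bigr => j _; case: (y j \in A).
rewrite sum1dep_card -(card_imset _ y_inj); apply: eq_card => z; rewrite !inE.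
apply/imsetP/andP => [[j] | [zA /imsetP [j]]].
  by rewrite inE => /andP [ji yjA] ->; split=> //; apply: imset_f; rewrite inE.
by rewrite inE => /andP [_ ji] z_yj; exists j; rewrite // inE ji -z_yj.
Qed.

Lemma hdot_hperm_phi (R : realFieldType) k i (le_ik : (i <= k)%N) (x y : 'I_k -> T)
    (w : {set T} -> R) p :
  injective y -> (forall j, x j != y j) ->
  hdot k (hperm w p) (phi R x y i) =
  signed_weight setT k w
    (perm_pairs (x \o widen_ord le_ik) (y \o widen_ord le_ik) p).
Proof.
move=> y_inj xy; rewrite /hdot /signed_weight (reindex (fun B => p @: B)) /=; last first.
  exists (fun A => (p^-1)%g @: A) => A _; first exact: imset_permVK.
  by rewrite -{1}[p]invgK imset_permVK.
apply: eq_big => [B | B _]; first by rewrite subsetT card_imset //; apply: perm_inj.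
rewrite /hperm imset_permVK mulrC phi_prod // (big_ord_narrow le_ik).
rewrite /phi_pairs big_map big_enum /=; congr (_ * _); apply: eq_bigr => j _.
by rewrite !mem_imset_perm.
Qed.

End PairSequences.

Theorem lemma3p1 (R : realFieldType) (T : finType) (k : nat)
  (w : {set T} -> R) (x y : 'I_k -> T) :
  (1 <= 2 * k)%N -> (2 * k <= #|T|)%N ->
  injective x -> injective y -> (forall j j' : 'I_k, x j != y j') ->
  forall i : nat, (i <= k)%N ->
    Wv k [set: T] w i =
    (\sum_(p : {perm T}) `|hdot k (hperm w p) (@phistar R T k x y i)|) / (#|T|`!)%:R.
Proof.
move=> _ le_2k_n x_inj y_inj xy i le_ik.
set u := x \o widen_ord le_ik; set v := y \o widen_ord le_ik.
have u_inj : injective u by move=> j j' /x_inj /(congr1 val) /= /val_inj.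
have v_inj : injective v by move=> j j' /y_inj /(congr1 val) /= /val_inj.
have uv j j' : u j != v j' by apply: xy.
set c := 'C(#|T| - 2 * i, k - i).
pose F (t : i.-tuple (T * T)) :=
  `|total_weight (k - i) (unused_vertices setT t) (wxy_iter t w)|.
have hdot_phistar p : `|hdot k (hperm w p) (phistar R x y i)| = F (perm_pairs u v p) / c%:R.
  have -> : hdot k (hperm w p) (phistar R x y i) = hdot k (hperm w p) (phi R x y i) / c%:R.
    by rewrite /hdot mulr_suml; apply: eq_bigr => A _; rewrite /phistar mulrA.
  rewrite hdot_hperm_phi // signed_weight_fresh ?fresh_perm_pairs ?size_tuple //.
  by rewrite normrM normfV [`|c%:R|]ger0_norm.
rewrite (eq_bigr _ (fun p _ => hdot_phistar p)) -mulr_suml sum_perm_pairs //.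
rewrite Wv_fresh_pairs // cardsT -(ffact_fact (_ : 2 * i <= #|T|)%N); last by lia.
rewrite -/c -[_ *+ (#|T| - 2 * i)`!]mulr_natr !natrM [X in _ / X]mulrC !invfM !mulrA.
rewrite [RHS]mulrAC (mulrAC _ c%:R^-1) mulfK; last by rewrite pnatr_eq0 -lt0n fact_gt0.
by rewrite [RHS]mulrAC.
Qed.
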